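(* Let $\mathcal{X}$ and $\mathcal{Y}$ be finite sets, let $n\ge 1$ and $k\ge 0$ be integers, and let $P_{\mathbf{y}|\mathbf{x}}$ be a channel from $\mathcal{X}^n$ to $\mathcal{Y}^n$. Let $P_{\mathbf{x}}$ be an arbitrary probability distribution on $\mathcal{X}^n$ and let $\Delta\in\mathbb{N}_0=\{0,1,2,\dots\}$. Then there exists an $(n,k,\epsilon_{\mathsf T},\epsilon_{\mathsf U})$-code for $P_{\mathbf{y}|\mathbf{x}}$ satisfying simultaneously $$\epsilon_{\mathsf T}\le \mathrm{RCU}(k+\Delta,n)\qquad\text{and}\qquad \epsilon_{\mathsf U}\le \mathrm{RCU}(k+\Delta,n)\,2^{-\Delta},$$ where, for an integer $j\ge 0$, $$\mathrm{RCU}(j,n)=\mathbb{E}\Big[\min\Big\{1,\,(2^{j}-1)\,\Pr\big[P_{\mathbf{y}|\mathbf{x}}(\mathbf{y}|\bar{\mathbf{x}})\ge P_{\mathbf{y}|\mathbf{x}}(\mathbf{y}|\mathbf{x})\,\big|\,\mathbf{x},\mathbf{y}\big]\Big\}\Big],$$ with $(\mathbf{x},\mathbf{y},\bar{\mathbf{x}})$ jointly distributed as $P_{\mathbf{x},\mathbf{y},\bar{\mathbf{x}}}(\mathbf{x},\mathbf{y},\bar{\mathbf{x}})=P_{\mathbf{x}}(\mathbf{x})\,P_{\mathbf{y}|\mathbf{x}}(\mathbf{y}|\mathbf{x})\,P_{\mathbf{x}}(\bar{\mathbf{x}})$ (the outer expectation is over $(\mathbf{x},\mathbf{y})$).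
   Context: A channel from $\mathcal{X}^n$ to $\mathcal{Y}^n$ is a conditional probability mass function $P_{\mathbf{y}|\mathbf{x}}(\mathbf{y}|\mathbf{x})$, $\mathbf{x}\in\mathcal{X}^n$, $\mathbf{y}\in\mathcal{Y}^n$. (The paper notes the same statement applies to continuous alphabets with conditional densities in place of pmfs.) Definition ($(n,k,\epsilon_{\mathsf T},\epsilon_{\mathsf U})$-code). An $(n,k,\epsilon_{\mathsf T},\epsilon_{\mathsf U})$-code for the channel $P_{\mathbf{y}|\mathbf{x}}$ consists of: (i) a discrete random variable $u$ with distribution $P_u$ on a set $\mathcal{U}$ with $|\mathcal{U}|\le 2$, known to both transmitter and receiver (common randomness); (ii) an encoder $\phi:\mathcal{U}\times\{1,\dots,2^k\}\to\mathcal{X}^n$; (iii) an erasure decoder $g:\mathcal{U}\times\mathcal{Y}^n\to\{0,1,\dots,2^k\}$, where output $0$ denotes an erasure. For each $u$ and $\hat w\in\{0,1,\dots,2^k\}$ let $\mathcal{D}_{u,\hat w}=\{\mathbf{y}: g(u,\mathbf{y})=\hat w\}$ (these partition $\mathcal{Y}^n$). The message $w$ is uniform on $\{1,\dots,2^k\}$ and independent of $u$, and given $u$ and $w=m$ the output $\mathbf{y}$ has law $P_{\mathbf{y}|\mathbf{x}}(\cdot\,|\,\phi(u,m))$. It is required that the total error probability and undetected error probability satisfy $$\frac{1}{2^k}\sum_{m=1}^{2^k}\sum_{\substack{m'=0\\ m'\ne m}}^{2^k}\Pr[\mathbf{y}\in\mathcal{D}_{u,m'}\mid w=m]\le\epsilon_{\mathsf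 T},\qquad \frac{1}{2^k}\sum_{m=1}^{2^k}\sum_{\substack{m'=1\\ m'\ne m}}^{2^k}\Pr[\mathbf{y}\in\mathcal{D}_{u,m'}\mid w=m]\le\epsilon_{\mathsf U},$$ where probabilities are over the pair $(u,\mathbf{y})$. *)

From HB Require Import structures.
From mathcomp Require Import all_boot all_order all_algebra.
From mathcomp Require Import reals.
Set Implicit Arguments. Unset Strict Implicit. Unset Printing Implicit Defensive.
Import Order.TTheory GRing.Theory Num.Theory.
Local Open Scope ring_scope.

Definition word (X : finType) (n : nat) := {ffun 'I_n -> X}.

Definition is_pmf (R : realType) (T : finType) (p : T -> R) : Prop :=
  (forall t, 0 <= p t) /\ \sum_(t : T) p t = 1.

Definition is_channel (R : realType) (A B : finType) (W : A -> B -> R) : Prop :=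
  forall a, is_pmf (W a).

(* Messages {1,..,2^k} are represented by 'I_(2^k); decoder output
   {0,1,..,2^k} by option 'I_(2^k), with None = erasure (0). *)

Definition total_err (R : realType) (X Y U : finType) (n k : nat)
  (W : word X n -> word Y n -> R) (Pu : U -> R)
  (phi : U -> 'I_(2 ^ k) -> word X n)
  (g : U -> word Y n -> option 'I_(2 ^ k)) : R :=
  ((2 ^ k)%:R)^-1 *
  \sum_(m : 'I_(2 ^ k)) \sum_(m' : option 'I_(2 ^ k) | m' != Some m)
     \sum_(u : U) Pu u * \sum_(y : word Y n | g u y == m') W (phi u m) y.

Definition undet_err (R : realType) (X Y U : finType) (n k : nat)
  (W : word X n -> word Y n -> R) (Pu : U -> R)
  (phi : U -> 'I_(2 ^ k) -> word X n)
  (g : U -> word Y n -> option 'I_(2 ^ k)) : R :=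
  ((2 ^ k)%:R)^-1 *
  \sum_(m : 'I_(2 ^ k)) \sum_(m' : 'I_(2 ^ k) | m' != m)
     \sum_(u : U) Pu u * \sum_(y : word Y n | g u y == Some m') W (phi u m) y.

Definition is_code (R : realType) (X Y : finType) (n k : nat)
  (W : word X n -> word Y n -> R) (eT eU : R) : Prop :=
  exists U : finType, (#|U| <= 2)%N /\
  exists Pu : U -> R, is_pmf Pu /\
  exists (phi : U -> 'I_(2 ^ k) -> word X n)
         (g : U -> word Y n -> option 'I_(2 ^ k)),
    total_err W Pu phi g <= eT /\ undet_err W Pu phi g <= eU.

Definition RCU (R : realType) (X Y : finType) (n : nat)
  (W : word X n -> word Y n -> R) (Px : word X n -> R) (j : nat) : R :=
  \sum_(x : word X n) \sum_(y : word Y n)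
    Px x * W x y *
    Num.min 1 (((2 ^ j)%:R - 1) *
               \sum_(xb : word X n | W x y <= W xb y) Px xb).

From HB Require Import structures.
From mathcomp Require Import all_boot all_order all_algebra.
From mathcomp Require Import reals.
From mathcomp Require Import ring lra.
Import Order.TTheory GRing.Theory Num.Theory.
Local Open Scope ring_scope.

(* Random coding with N = 2^(k+Delta) i.i.d. codewords of which only the first
   2^k carry messages; the decoder outputs the message whose codeword has the
   strictly largest likelihood among all N, and erases otherwise.  On average,
   the total error is 1 - Pr[the sent codeword wins], which the union
   bound 1 - s^(N-1) <= (N-1)(1-s) turns into RCU(k+Delta).  The undetected
   error is (2^k - 1) V, where V is the probability that a fixed other codeword
   wins; since at most one codeword wins, (N-1) V <= RCU(k+Delta), whence the
   factor 2^-Delta.  Finally, a random codebook whose two expected errors meet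
   both bounds can be replaced by a mixture of two codebooks: if a weighted
   mean of points of the plane lies in the closed negative quadrant, so does a
   point on a segment joining two of them.  This mixture is the common
   randomness with |U| <= 2. *)

Lemma prodr_natr_forall (R : comPzSemiRingType) (I : finType) (P : pred I)
    (b : pred I) :
  \prod_(i | P i) ((b i)%:R : R) = [forall i, P i ==> b i]%:R.
Proof.
case: (boolP [forall i, P i ==> b i]) => [/forallP allPb | /forallPn[i]].
  by apply: big1 => i /(implyP (allPb i)) ->.
rewrite negb_imply => /andP[Pi /negbTE bi].
by rewrite (bigD1 i) //= bi mul0r.
Qed.

Lemma card_ord_neq {N} (i : 'I_N) : #|[pred j | j != i]| = N.-1.
Proof. by rewrite -[N in RHS]card_ord -(cardC1 i); apply: eq_card. Qed.

Lemma card_ord_neq2 {N} {i i' : 'I_N} : i != i' ->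
  #|[pred j | (j != i') && (j != i)]| = N.-2.
Proof.
move=> neq; have := cardD1 i [pred j | j != i'].
rewrite card_ord_neq inE neq /= add1n => /(congr1 predn) /= ->.
by apply: eq_card => j; rewrite !inE andbC.
Qed.

Lemma sumr_ord_neq_const {R : pzRingType} {N} (i : 'I_N) (a : R) :
  \sum_(j | j != i) a = (N%:R - 1) * a.
Proof.
have N_gt0 : (0 < N)%N := leq_ltn_trans (leq0n i) (ltn_ord i).
by rewrite sumr_const card_ord_neq -[in RHS](prednK N_gt0) -natr1 addrK mulr_natl.
Qed.

Lemma sumr_fibers {R : nmodType} {T U : finType} (g : U -> T) (P : pred T)
    (F : U -> R) :
  \sum_(t | P t) \sum_(u | g u == t) F u = \sum_(u | P (g u)) F u.
Proof.
rewrite (partition_big g P) //; apply: eq_bigr => t Pt.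
by apply: eq_bigl => u; case: eqP => [->|]; rewrite ?Pt ?andbF.
Qed.

Lemma mean_ord_const {R : numFieldType} {K} (K_gt0 : (0 < K)%N) (a : R) :
  (K%:R)^-1 * \sum_(m < K) a = a.
Proof. by rewrite sumr_const card_ord -[a *+ K]mulr_natl mulKf // pnatr_eq0 -lt0n. Qed.

Lemma ler_sub1_scaled {R : realFieldType} (K t v a : R) :
  0 <= v -> 1 <= t -> (K * t - 1) * v <= a -> (K - 1) * v <= a * t^-1.
Proof.
move=> v_ge0 t_ge1 scaled_le; have t_gt0 : 0 < t by lra.
have tV_le1 : t^-1 <= 1 by rewrite invf_le1.
have -> : (K - 1) * v = t^-1 * ((K * t - 1) * v) - (1 - t^-1) * v.
  by field; rewrite lt0r_neq0.
have : 0 <= (1 - t^-1) * v by rewrite mulr_ge0 // subr_ge0.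
have : t^-1 * ((K * t - 1) * v) <= t^-1 * a.
  by apply: ler_wpM2l => //; rewrite invr_ge0 ltW.
rewrite [a * _]mulrC; lra.
Qed.

Lemma onem_exprn_le (R : realDomainType) (s : R) (p : nat) : 0 <= s <= 1 ->
  1 - s ^+ p <= p%:R * (1 - s).
Proof.
move=> /andP[s_ge0 s_le1]; elim: p => [|p IHp]; first by rewrite expr0 subrr mul0r.
have sp_le1 : s ^+ p <= 1 by rewrite exprn_ile1.
have : s ^+ p * (1 - s) <= 1 - s by rewrite ler_piMl // subr_ge0.
rewrite exprS -natr1; nra.
Qed.

(* Conditioning an i.i.d. tuple on its [i]-th coordinate [t]: the other
   coordinates stay i.i.d. *)
Lemma sum_ffun_prod_condition {R : comPzSemiRingType} {T I : finType} (P : T -> R)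
    (i : I) (F : T -> I -> T -> R) (H : T -> R) :
  \sum_(c : {ffun I -> T}) (\prod_j P (c j)) *
     ((\prod_(j | j != i) F (c i) j (c j)) * H (c i))
  = \sum_t P t * H t * \prod_(j | j != i) \sum_x P x * F t j x.
Proof.
pose G t j x := P x * (if j == i then (x == t)%:R * H t else F t j x).
transitivity (\sum_(c : {ffun I -> T}) \sum_t \prod_j G t j (c j)).
  apply: eq_bigr => c _; rewrite (bigD1 (c i)) //= [X in _ + X]big1 ?addr0; last first.
    by move=> t /negbTE ct; rewrite (bigD1 i) //= /G eqxx eq_sym ct mul0r mulr0 mul0r.
  rewrite /G big_split /= [X in _ = _ * X](bigD1 i) //= !eqxx mul1r [H _ * _]mulrC.
  by congr (_ * (_ * _)); apply: eq_bigr => j /negbTE ->.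
rewrite exchange_big /=; apply: eq_bigr => t _.
rewrite -(bigA_distr_bigA (G t)) (bigD1 i) //=; congr (_ * _).
  rewrite (bigD1 t) //= [X in _ + X]big1 /G ?eqxx ?mul1r ?addr0 //.
  by move=> x /negbTE ->; rewrite mul0r mulr0.
by apply: eq_bigr => j /negbTE ji; rewrite /G ji.
Qed.

Lemma sumr_gt0_witness {R : numDomainType} {I : finType} {P : pred I}
    {F : I -> R} (i0 : I) :
  (forall i, P i -> 0 <= F i) -> P i0 -> 0 < F i0 -> 0 < \sum_(i | P i) F i.
Proof.
move=> F_ge0 Pi0 Fi0; rewrite (bigD1 i0) //=.
by rewrite ltr_pwDl // sumr_ge0 // => i /andP[/F_ge0].
Qed.

Lemma segment_meets_nonpos_quadrant {R : realFieldType} {xp yp xq yq : R} :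
  xp <= 0 -> yq <= 0 -> 0 < xq -> xq * yp <= xp * yq ->
  exists l, 0 <= l <= 1 /\ l * xp + (1 - l) * xq <= 0 /\
                           l * yp + (1 - l) * yq <= 0.
Proof.
move=> xp_le0 yq_le0 xq_gt0 cross.
have d_gt0 : 0 < xq - xp by lra.
exists (xq / (xq - xp)); split; [|split].
- rewrite divr_ge0 ?ler_pdivrMr //=; lra.
- suff -> : xq / (xq - xp) * xp + (1 - xq / (xq - xp)) * xq = 0 by [].
  by field; rewrite gt_eqF.
- suff -> : xq / (xq - xp) * yp + (1 - xq / (xq - xp)) * yq
            = (xq * yp - xp * yq) / (xq - xp).
    by apply: mulr_le0_ge0; rewrite ?invr_ge0; lra.
  by field; rewrite gt_eqF.
Qed.

Section QuadrantMixture.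
Local Set Implicit Arguments.
Local Unset Strict Implicit.
Variables (R : realFieldType) (C : finType) (w x y : C -> R).
Hypotheses (w_ge0 : forall c, 0 <= w c) (w_sum1 : \sum_c w c = 1).

Lemma sum_weighted_gt0 (F : C -> R) :
  (forall c, 0 < w c -> 0 < F c) -> 0 < \sum_c w c * F c.
Proof.
move=> F_gt0.
have [c0 /andP[_ wc0_gt0]] : exists c, true && (0 < w c).
  by apply: psumr_neq0P => //; rewrite w_sum1; apply/eqP; rewrite oner_neq0.
apply: (sumr_gt0_witness (P := predT) c0) => // [c _|]; last by rewrite mulr_gt0 ?F_gt0.
have [<-|wc_gt0] := eqVneq 0 (w c); first by rewrite mul0r.
by apply: mulr_ge0 => //; apply/ltW/F_gt0; rewrite lt0r eq_sym wc_gt0 w_ge0.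
Qed.

Lemma no_crossing_segment_false :
  (forall c, y c <= 0 -> 0 < x c) ->
  (forall p q, x p <= 0 -> y q <= 0 -> x p * y q < x q * y p) ->
  \sum_c w c * x c <= 0 -> \sum_c w c * y c <= 0 -> False.
Proof.
move=> y_le0_x_gt0 no_cross Xsum_le0 Ysum_le0.
have cross_gt0 q c : y q <= 0 -> 0 < y c -> 0 < x q * y c - x c * y q.
  move=> yq_le0 yc_gt0; have xq_gt0 := y_le0_x_gt0 q yq_le0.
  have [xc_le0|xc_gt0] := lerP (x c) 0; first by have := no_cross c q xc_le0 yq_le0; lra.
  by have := mulr_gt0 xq_gt0 yc_gt0; have := mulr_ge0_le0 (ltW xc_gt0) yq_le0; lra.
have [c1 /andP[wc1_gt0 yc1_gt0]] : exists c, (0 < w c) && (0 < y c).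
  apply/existsP; apply: contraT; rewrite negb_exists => /forallP no_c.
  suff : 0 < \sum_c w c * x c by lra.
  apply: sum_weighted_gt0 => c wc_gt0; apply: y_le0_x_gt0.
  by move: (no_c c); rewrite wc_gt0 -leNgt.
have [q1 /andP[wq1_gt0 yq1_le0]] : exists q, (0 < w q) && (y q <= 0).
  apply/existsP; apply: contraT; rewrite negb_exists => /forallP no_q.
  suff : 0 < \sum_c w c * y c by lra.
  by apply: sum_weighted_gt0 => c wc_gt0; move: (no_q c); rewrite wc_gt0 -ltNge.
(* The mixed cross products between the points with [y <= 0] and those with
   [y > 0] are all nonnegative, one of them is positive, yet their weighted sum
   is [Xn * Yp - Xp * Yn <= 0]. *)
pose A := [pred c | y c <= 0].
pose Xn := \sum_(q | A q) w q * x q; pose Xp := \sum_(c | ~~ A c) w c * x c.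
pose Yn := \sum_(q | A q) w q * y q; pose Yp := \sum_(c | ~~ A c) w c * y c.
have Xn_ge0 : 0 <= Xn.
  by apply: sumr_ge0 => q /y_le0_x_gt0 /ltW; apply: mulr_ge0.
have Yn_le0 : Yn <= 0.
  by apply: sumr_le0 => q Aq; rewrite mulr_ge0_le0.
have Xsum : Xn + Xp <= 0 by move: Xsum_le0; rewrite (bigID A).
have Ysum : Yn + Yp <= 0 by move: Ysum_le0; rewrite (bigID A).
have double_sum : \sum_(q | A q) \sum_(c | ~~ A c)
    w q * w c * (x q * y c - x c * y q) = Xn * Yp - Xp * Yn.
  rewrite /Xn /Yp /Xp /Yn !big_distrlr [X in _ - X]exchange_big -sumrB /=.
  apply: eq_bigr => q _.
  rewrite -sumrB; apply: eq_bigr => c _; ring.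
have term_ge0 q c : A q -> ~~ A c -> 0 <= w q * w c * (x q * y c - x c * y q).
  rewrite inE -ltNge => yq_le0 yc_gt0.
  by rewrite mulr_ge0 ?mulr_ge0 // ltW // cross_gt0.
have : 0 < Xn * Yp - Xp * Yn.
  rewrite -double_sum; apply: (sumr_gt0_witness q1) => // [q Aq|].
    by apply: sumr_ge0 => c; apply: term_ge0.
  apply: (sumr_gt0_witness c1) => [c||]; first exact: term_ge0.
    by rewrite inE -ltNge.
  by rewrite !mulr_gt0 // cross_gt0.
nra.
Qed.

Lemma nonpos_mean_two_point :
  \sum_c w c * x c <= 0 -> \sum_c w c * y c <= 0 ->
  exists c1 c2 (l : R), 0 <= l <= 1 /\
    l * x c1 + (1 - l) * x c2 <= 0 /\ l * y c1 + (1 - l) * y c2 <= 0.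
Proof.
move=> Xsum_le0 Ysum_le0.
have [c /andP[xc_le0 yc_le0]|noQ] := pickP (fun c => (x c <= 0) && (y c <= 0)).
  by exists c, c, 1; rewrite subrr !mul0r !addr0 !mul1r ler01 lexx.
have y_le0_x_gt0 c : y c <= 0 -> 0 < x c.
  by move=> yc_le0; move: (noQ c); rewrite yc_le0 andbT ltNge => ->.
have [[p q] /= /and3P[xp_le0 yq_le0 cross]|no_cross] :=
  pickP (fun pq : C * C => [&& x pq.1 <= 0, y pq.2 <= 0 &
                              x pq.2 * y pq.1 <= x pq.1 * y pq.2]).
  have [l [l01 seg]] := segment_meets_nonpos_quadrant xp_le0 yq_le0
                          (y_le0_x_gt0 q yq_le0) cross.
  by exists p, q, l.
exfalso; apply: no_crossing_segment_false => // p q xp_le0 yq_le0.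
by move: (no_cross (p, q)); rewrite /= xp_le0 yq_le0 /= ltNge => ->.
Qed.

End QuadrantMixture.

Section DeterministicCodes.
Local Set Implicit Arguments.
Local Unset Strict Implicit.
Variables (R : realType) (X Y : finType) (n : nat).
Variable (W : word X n -> word Y n -> R).

Definition det_total_err {K} (phi : 'I_K -> word X n)
    (g : word Y n -> option 'I_K) : R :=
  (K%:R)^-1 * \sum_m \sum_(m' | m' != Some m) \sum_(y | g y == m') W (phi m) y.

Definition det_undet_err {K} (phi : 'I_K -> word X n)
    (g : word Y n -> option 'I_K) : R :=
  (K%:R)^-1 * \sum_m \sum_(m' | m' != m) \sum_(y | g y == Some m') W (phi m) y.

Lemma total_err_mixture (U : finType) k (Pu : U -> R)
    (phi : U -> 'I_(2 ^ k) -> word X n) (g : U -> word Y n -> option 'I_(2 ^ k)) :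
  total_err W Pu phi g = \sum_u Pu u * det_total_err (phi u) (g u).
Proof.
rewrite /total_err; under [RHS]eq_bigr do rewrite mulrCA mulr_sumr.
rewrite -mulr_sumr exchange_big /=; congr (_ * _); apply: eq_bigr => m _.
by under [RHS]eq_bigr do rewrite mulr_sumr; rewrite exchange_big.
Qed.

Lemma undet_err_mixture (U : finType) k (Pu : U -> R)
    (phi : U -> 'I_(2 ^ k) -> word X n) (g : U -> word Y n -> option 'I_(2 ^ k)) :
  undet_err W Pu phi g = \sum_u Pu u * det_undet_err (phi u) (g u).
Proof.
rewrite /undet_err; under [RHS]eq_bigr do rewrite mulrCA mulr_sumr.
rewrite -mulr_sumr exchange_big /=; congr (_ * _); apply: eq_bigr => m _.
by under [RHS]eq_bigr do rewrite mulr_sumr; rewrite exchange_big.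
Qed.

Lemma is_code_of_ensemble k (C : finType) (w : C -> R)
    (phi : C -> 'I_(2 ^ k) -> word X n) (g : C -> word Y n -> option 'I_(2 ^ k))
    (eT eU : R) :
  is_pmf w ->
  \sum_c w c * det_total_err (phi c) (g c) <= eT ->
  \sum_c w c * det_undet_err (phi c) (g c) <= eU ->
  is_code k W eT eU.
Proof.
move=> [w_ge0 w_sum1] T_le U_le.
have centered (F : C -> R) e : \sum_c w c * (F c - e) = \sum_c w c * F c - e.
  by under eq_bigr do rewrite mulrBr; rewrite sumrB -mulr_suml w_sum1 mul1r.
pose T c := det_total_err (phi c) (g c) - eT.
pose U c := det_undet_err (phi c) (g c) - eU.
have T_mean : \sum_c w c * T c <= 0 by rewrite centered subr_le0.
have U_mean : \sum_c w c * U c <= 0 by rewrite centered subr_le0.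
have [c1 [c2 [l [/andP[l_ge0 l_le1] [T_mix U_mix]]]]] :=
  nonpos_mean_two_point w_ge0 w_sum1 T_mean U_mean.
exists bool; split; first by rewrite card_bool.
exists (fun b => if b then l else 1 - l); split.
  by split=> [[]|]; rewrite ?big_bool /= ?subr_ge0 // addrC subrK.
exists (fun b => phi (if b then c1 else c2)), (fun b => g (if b then c1 else c2)).
rewrite total_err_mixture undet_err_mixture !big_bool /=.
move: T_mix U_mix; rewrite /T /U.
set t1 := det_total_err _ _; set t2 := det_total_err _ _.
set u1 := det_undet_err _ _; set u2 := det_undet_err _ _.
by move=> T_mix U_mix; split; lra.
Qed.

End DeterministicCodes.

Section RandomCodebook.
Local Set Implicit Arguments.
Local Unset Strict Implicit.
Variables (R : realType) (X Y : finType) (n N : nat).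
Variables (W : word X n -> word Y n -> R) (Px : word X n -> R).
Hypotheses (W_channel : is_channel W) (Px_pmf : is_pmf Px).

Definition codebook := {ffun 'I_N -> word X n}.

Definition codebook_prob (c : codebook) : R := \prod_i Px (c i).

Definition beats_all (c : codebook) (y : word Y n) (i : 'I_N) : bool :=
  [forall j, (j != i) ==> (W (c j) y < W (c i) y)].

Definition prob_below (x0 : word X n) (y : word Y n) : R :=
  \sum_x Px x * (W x y < W x0 y)%R%:R.

Definition mass_below (x1 : word X n) (y : word Y n) : R :=
  \sum_x Px x * ((W x y < W x1 y)%R%:R * W x y).

Definition correct_mass (y : word Y n) : R :=
  \sum_x0 Px x0 * W x0 y * prob_below x0 y ^+ N.-1.

Definition confusion_mass (y : word Y n) : R :=
  \sum_x1 Px x1 * mass_below x1 y * prob_below x1 y ^+ N.-2.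

Lemma W_ge0 x y : 0 <= W x y.
Proof. exact: (W_channel x).1. Qed.

Lemma codebook_prob_pmf : is_pmf codebook_prob.
Proof.
split=> [c|]; first by apply: prodr_ge0 => i _; apply: Px_pmf.1.
rewrite /codebook_prob -(bigA_distr_bigA (fun _ => Px)).
by apply: big1 => i _; apply: Px_pmf.2.
Qed.

Lemma beats_allE c y i :
  (beats_all c y i)%:R = \prod_(j | j != i) ((W (c j) y < W (c i) y)%R%:R : R).
Proof. by rewrite prodr_natr_forall. Qed.

Lemma beats_all_uniq {c y i j} : beats_all c y i -> beats_all c y j -> i = j.
Proof.
move=> /forallP beats_i /forallP beats_j; apply/eqP; apply: contraT => neq.
have lt_ij := implyP (beats_j i) neq; rewrite eq_sym in neq.
by have := lt_trans lt_ij (implyP (beats_i j) neq); rewrite ltxx.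
Qed.

Lemma sum_beats_all_le1 c y : \sum_i ((beats_all c y i)%:R : R) <= 1.
Proof.
have [i beats_i|none] := pickP (beats_all c y).
  rewrite (bigD1 i) //= beats_i big1 ?addr0 // => j; apply: contraNeq.
  by rewrite pnatr_eq0 eqb0 negbK => /beats_all_uniq/(_ beats_i) ->.
by rewrite big1 // => i _; rewrite none.
Qed.

Lemma expected_beats_all_sent y i :
  \sum_c codebook_prob c * ((beats_all c y i)%:R * W (c i) y) = correct_mass y.
Proof.
under eq_bigr do rewrite beats_allE.
rewrite (sum_ffun_prod_condition Px i (fun t _ x => (W x y < W t y)%R%:R) (W^~ y)).
apply: eq_bigr => x0 _.
by rewrite -(card_ord_neq i) -prodr_const.
Qed.

Lemma expected_beats_all_other y i i' : i != i' ->
  \sum_c codebook_prob c * ((beats_all c y i')%:R * W (c i) y) = confusion_mass y.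
Proof.
move=> neq.
pose F (t : word X n) (j : 'I_N) (x : word X n) :=
  ((W x y < W t y)%R%:R : R) * (if j == i then W x y else 1).
transitivity (\sum_(c : codebook) codebook_prob c *
                ((\prod_(j | j != i') F (c i') j (c j)) * 1)).
  apply: eq_bigr => c _; rewrite beats_allE mulr1 big_split /=.
  rewrite [X in _ = _ * (_ * X)](bigD1 i) //= eqxx [X in W _ _ * X]big1 ?mulr1 //.
  by move=> j /andP[_ /negbTE ->].
rewrite (sum_ffun_prod_condition Px i' F (fun=> 1)); apply: eq_bigr => x1 _.
rewrite (bigD1 i) //= -(card_ord_neq2 neq) -prodr_const.
rewrite mulr1 mulrA; congr (_ * _ * _).
  by apply: eq_bigr => x _; rewrite /F eqxx.
by apply: eq_bigr => j /andP[_ /negbTE ji]; apply: eq_bigr => x _; rewrite /F ji mulr1.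
Qed.

Lemma correct_confusion_le1 : (0 < N)%N ->
  (N%:R - 1) * \sum_y confusion_mass y + \sum_y correct_mass y <= 1.
Proof.
move=> N_gt0; pose i0 := Ordinal N_gt0.
have expand y : \sum_i \sum_c codebook_prob c * ((beats_all c y i)%:R * W (c i0) y)
                = (N%:R - 1) * confusion_mass y + correct_mass y.
  rewrite (bigD1 i0) //= expected_beats_all_sent addrC -(sumr_ord_neq_const i0).
  by congr (_ + _); apply: eq_bigr => i; rewrite eq_sym => /expected_beats_all_other.
rewrite mulr_sumr -big_split /=; under eq_bigr do rewrite -expand.
have [_ sum1] := codebook_prob_pmf; rewrite -[leRHS]sum1.
under eq_bigr do rewrite exchange_big /=; rewrite exchange_big /=.
apply: ler_sum => c _; rewrite -[leRHS]mulr1 -[1 in leRHS](W_channel (c i0)).2 mulr_sumr.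
apply: ler_sum => y _; rewrite -mulr_sumr ler_wpM2l ?codebook_prob_pmf.1 //.
rewrite -mulr_suml ler_piMl ?W_ge0 //.
exact: sum_beats_all_le1.
Qed.

Lemma prob_not_below x y :
  \sum_(xb | W x y <= W xb y) Px xb = 1 - prob_below x y.
Proof.
have -> : prob_below x y = \sum_(xb | ~~ (W x y <= W xb y)) Px xb.
  rewrite /prob_below [RHS]big_mkcond; apply: eq_bigr => xb _.
  by rewrite -ltNge; case: (W xb y < W x y)%R; rewrite ?mulr1 ?mulr0.
by rewrite -[1]Px_pmf.2 [in RHS](bigID (fun xb => W x y <= W xb y)) /= addrK.
Qed.

Lemma prob_below_ge0 x y : 0 <= prob_below x y.
Proof. by apply: sumr_ge0 => xb _; rewrite mulr_ge0 ?Px_pmf.1. Qed.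

Lemma prob_below_le1 x y : prob_below x y <= 1.
Proof.
rewrite -subr_ge0 -prob_not_below; apply: sumr_ge0 => xb _; exact: Px_pmf.1.
Qed.

Lemma one_sub_correct_le_RCU j : N = (2 ^ j)%N ->
  1 - \sum_y correct_mass y <= RCU W Px j.
Proof.
move=> N_eq; have N_gt0 : (0 < N)%N by rewrite N_eq expn_gt0.
have joint_sum1 : \sum_x \sum_y Px x * W x y = 1.
  rewrite -[RHS]Px_pmf.2; apply: eq_bigr => x _.
  by rewrite -mulr_sumr (W_channel x).2 mulr1.
rewrite -[1]joint_sum1 /correct_mass [X in _ - X]exchange_big /= -sumrB /RCU.
apply: ler_sum => x _; rewrite -sumrB; apply: ler_sum => y _.
rewrite -[X in X - _]mulr1 -mulrBr ler_wpM2l ?mulr_ge0 ?Px_pmf.1 ?W_ge0 //.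
have s01 : 0 <= prob_below x y <= 1 by rewrite prob_below_ge0 prob_below_le1.
rewrite le_min prob_not_below -N_eq -[N in N%:R](prednK N_gt0) -natr1 addrK.
by rewrite lerBlDr lerDl exprn_ge0 ?prob_below_ge0 //= onem_exprn_le.
Qed.

Variables (K : nat) (K_le_N : (K <= N)%N).

Definition ml_encoder (c : codebook) (m : 'I_K) : word X n := c (widen_ord K_le_N m).

(* The codewords beyond the first [K] are decoys: their winning causes an
   erasure. *)
Definition ml_decoder (c : codebook) (y : word Y n) : option 'I_K :=
  [pick m : 'I_K | beats_all c y (widen_ord K_le_N m)].

Lemma ml_decoder_eq_some c y m :
  (ml_decoder c y == Some m) = beats_all c y (widen_ord K_le_N m).
Proof.
rewrite /ml_decoder; case: pickP => [m0 beats_m0|none]; last by rewrite none.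
apply/eqP/idP => [[<-] //|beats_m]; congr Some; apply: val_inj.
by have /(congr1 val) := beats_all_uniq beats_m0 beats_m.
Qed.

Lemma det_total_err_ml c :
  det_total_err W (ml_encoder c) (ml_decoder c) = (K%:R)^-1 * \sum_m
    (1 - \sum_y (beats_all c y (widen_ord K_le_N m))%:R * W (ml_encoder c m) y).
Proof.
congr (_ * _); apply: eq_bigr => m _.
rewrite sumr_fibers -[X in X - _](W_channel (ml_encoder c m)).2 -sumrB big_mkcond.
apply: eq_bigr => y _; rewrite -ml_decoder_eq_some.
by case: eqP => _; rewrite /= ?mul0r ?mul1r ?subrr ?subr0.
Qed.

Lemma det_undet_err_ml c :
  det_undet_err W (ml_encoder c) (ml_decoder c) = (K%:R)^-1 * \sum_m
    \sum_(m' | m' != m) \sum_y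
      (beats_all c y (widen_ord K_le_N m'))%:R * W (ml_encoder c m) y.
Proof.
congr (_ * _); apply: eq_bigr => m _; apply: eq_bigr => m' _.
rewrite big_mkcond; apply: eq_bigr => y _; rewrite ml_decoder_eq_some.
by case: beats_all; rewrite ?mul1r ?mul0r.
Qed.

Hypothesis K_gt0 : (0 < K)%N.

Lemma expected_total_err :
  \sum_c codebook_prob c * det_total_err W (ml_encoder c) (ml_decoder c)
  = 1 - \sum_y correct_mass y.
Proof.
under eq_bigr do rewrite det_total_err_ml mulrCA mulr_sumr.
rewrite -mulr_sumr exchange_big /= -[RHS](mean_ord_const K_gt0).
congr (_ * _); apply: eq_bigr => m _.
under eq_bigr do rewrite mulrBr mulr1 mulr_sumr.
rewrite sumrB codebook_prob_pmf.2 exchange_big /=; congr (_ - _).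
by apply: eq_bigr => y _; apply: expected_beats_all_sent.
Qed.

Lemma expected_undet_err :
  \sum_c codebook_prob c * det_undet_err W (ml_encoder c) (ml_decoder c)
  = (K%:R - 1) * \sum_y confusion_mass y.
Proof.
under eq_bigr do rewrite det_undet_err_ml mulrCA mulr_sumr.
rewrite -mulr_sumr exchange_big /= -[RHS](mean_ord_const K_gt0).
congr (_ * _); apply: eq_bigr => m _; rewrite -(sumr_ord_neq_const m).
under eq_bigr do rewrite mulr_sumr; rewrite exchange_big /=.
apply: eq_bigr => m' neq; under eq_bigr do rewrite mulr_sumr.
rewrite exchange_big /=; apply: eq_bigr => y _.
apply: expected_beats_all_other; apply: contra neq => /eqP/(congr1 val) eq_val.
by apply/eqP/val_inj.
Qed.

Lemma confusion_mass_ge0 y : 0 <= confusion_mass y.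
Proof.
apply: sumr_ge0 => x1 _.
rewrite !mulr_ge0 ?Px_pmf.1 ?W_ge0 ?exprn_ge0 ?prob_below_ge0 //.
by apply: sumr_ge0 => x _; rewrite !mulr_ge0 ?Px_pmf.1 ?W_ge0.
Qed.

Lemma expected_undet_err_le j d : N = (2 ^ (j + d))%N -> K = (2 ^ j)%N ->
  \sum_c codebook_prob c * det_undet_err W (ml_encoder c) (ml_decoder c)
  <= RCU W Px (j + d) * 2 ^- d.
Proof.
move=> N_eq K_eq; rewrite expected_undet_err.
apply: ler_sub1_scaled; first by apply: sumr_ge0 => y _; apply: confusion_mass_ge0.
  by rewrite exprn_ege1 // ler1n.
have N_gt0 : (0 < N)%N by rewrite N_eq expn_gt0.
rewrite K_eq -natrX -natrM -expnD -N_eq.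
have := correct_confusion_le1 N_gt0; have := one_sub_correct_le_RCU N_eq; lra.
Qed.

End RandomCodebook.

Theorem theorem1 (R : realType) (X Y : finType) (n k : nat)
  (W : word X n -> word Y n -> R) (Px : word X n -> R) (Delta : nat) :
  (1 <= n)%N -> is_channel W -> is_pmf Px ->
  exists eT eU : R,
    is_code k W eT eU /\
    eT <= RCU W Px (k + Delta) /\
    eU <= RCU W Px (k + Delta) * (2 ^- Delta).
Proof.
move=> _ W_channel Px_pmf.
pose N := (2 ^ (k + Delta))%N.
have K_le_N : (2 ^ k <= N)%N by rewrite leq_pexp2l // leq_addr.
have K_gt0 : (0 < 2 ^ k)%N by rewrite expn_gt0.
exists (RCU W Px (k + Delta)), (RCU W Px (k + Delta) * 2 ^- Delta).
split; last by split.
apply: (is_code_of_ensemble (codebook_prob_pmf N Px_pmf)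
          (phi := ml_encoder K_le_N) (g := ml_decoder W K_le_N)).
  rewrite (expected_total_err W_channel Px_pmf K_le_N K_gt0).
  exact: one_sub_correct_le_RCU.
exact: (expected_undet_err_le W_channel Px_pmf K_le_N K_gt0).
Qed.
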